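(* Let $\mathbf{y}\in\mathbb{R}^n$ with $\sum_i y_i=0$, and let $\mathbf{X}\in\mathbb{R}^{n\times p}$ have centered columns with $\frac1n\sum_i x_{ij}^2=1$, whose $p$ columns are partitioned into $G$ non-overlapping groups, group $g$ having $W_g$ columns forming the submatrix $\mathbf{X}_g\in\mathbb{R}^{n\times W_g}$, and assume $\frac1n\mathbf{X}_g^T\mathbf{X}_g=\mathbf{I}$ for all $g=1,\ldots,G$. For $\lambda>0$ let $$\widehat{\boldsymbol\beta}(\lambda)=\operatorname*{argmin}_{\boldsymbol\beta\in\mathbb{R}^p}\ \frac{1}{2n}\Big\|\mathbf{y}-\sum_{g=1}^G\mathbf{X}_g\boldsymbol\beta_g\Big\|^2+\lambda\sum_{g=1}^G\sqrt{W_g}\|\boldsymbol\beta_g\|,$$ where $\boldsymbol\beta=(\boldsymbol\beta_1^T,\ldots,\boldsymbol\beta_G^T)^T$ with $\boldsymbol\beta_g\in\mathbb{R}^{W_g}$. Let $\lambda_m=\max_g\frac{\|\mathbf{X}_g^T\mathbf{y}\|}{n\sqrt{W_g}}$, let $\mathbf{X}_*$ be the submatrix of a group attaining this maximum and $W_*$ its number of columns, and let $\bar{\mathbf{v}}=\mathbf{X}_*\mathbf{X}_*^T\mathbf{y}$. Then for any $\lambda\in(0,\lambda_m]$ and $g=1,\ldots,G$, we have $\widehat{\boldsymbol\beta}_g(\lambda)=\mathbf{0}$ if $$\sqrt{(\lambda+\lambda_m)^2\|\mathbf{X}_g^T\mathbf{y}\|^2-\frac{2(\lambda_m^2-\lam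bda^2)\,\mathbf{y}^T\mathbf{X}_g\mathbf{X}_g^T\bar{\mathbf{v}}}{n}+\frac{(\lambda_m-\lambda)^2\|\mathbf{X}_g^T\bar{\mathbf{v}}\|^2}{n^2}}<2n\lambda\lambda_m\sqrt{W_g}-(\lambda_m-\lambda)\sqrt{n\|\mathbf{y}\|^2-n^2\lambda_m^2W_*}.$$
   Context: $\|\cdot\|$ denotes the Euclidean norm of a vector; $\widehat{\boldsymbol\beta}_g(\lambda)$ is the block of the group lasso solution corresponding to group $g$. *)

From HB Require Import structures.
From mathcomp Require Import all_boot all_order all_algebra.
From mathcomp Require Import reals.
Set Implicit Arguments. Unset Strict Implicit. Unset Printing Implicit Defensive.
Import Order.TTheory GRing.Theory Num.Theory.
Local Open Scope ring_scope.

Section GroupLasso.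
Variables (R : realType) (n p G : nat).

(* Columns are partitioned into groups by grp : 'I_p -> 'I_G;
   group g consists of the columns j with grp j = g. *)

Definition gsize (grp : 'I_p -> 'I_G) (g : 'I_G) : nat :=
  #|[set j | grp j == g]|.

Definition gnorm2 (grp : 'I_p -> 'I_G) (g : 'I_G) (v : 'cV[R]_p) : R :=
  \sum_(j < p | grp j == g) v j 0 ^+ 2.

Definition vnorm2 (v : 'cV[R]_n) : R := \sum_(i < n) v i 0 ^+ 2.

(* group lasso objective
   1/(2n) ||y - sum_g X_g b_g||^2 + lam * sum_g sqrt(W_g) ||b_g|| ;
   note sum_g X_g b_g = X b since the groups partition the columns *)
Definition glasso_obj (X : 'M[R]_(n, p)) (y : 'cV[R]_n) (grp : 'I_p -> 'I_G)
    (lam : R) (b : 'cV[R]_p) : R :=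
  (2 * n%:R)^-1 * vnorm2 (y - X *m b)
  + lam * \sum_(g < G) Num.sqrt (gsize grp g)%:R * Num.sqrt (gnorm2 grp g b).

Definition is_glasso_min X y grp lam (b : 'cV[R]_p) : Prop :=
  forall b' : 'cV[R]_p, glasso_obj X y grp lam b <= glasso_obj X y grp lam b'.

Definition gratio (X : 'M[R]_(n, p)) (y : 'cV[R]_n) grp (g : 'I_G) : R :=
  Num.sqrt (gnorm2 grp g (X^T *m y)) / (n%:R * Num.sqrt (gsize grp g)%:R).

(* X_g X_g^T v = sum_{j in g} (col_j^T v) col_j *)
Definition gproj (X : 'M[R]_(n, p)) grp (g : 'I_G) (v : 'cV[R]_n) : 'cV[R]_n :=
  \sum_(j < p | grp j == g) (X^T *m v) j 0 *: col j X.

(* y^T X_g X_g^T v = sum_{j in g} (X^T y)_j (X^T v)_j *)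
Definition gcross (X : 'M[R]_(n, p)) grp (g : 'I_G) (y v : 'cV[R]_n) : R :=
  \sum_(j < p | grp j == g) (X^T *m y) j 0 * (X^T *m v) j 0.

End GroupLasso.

(* Let r = y - X b be the residual at a minimiser b.  Perturbing b inside one
   block gives the optimality conditions <b_g, X_g^T r> = n lam sqrt(W_g) ||b_g||
   and ||X_g^T r|| <= n lam sqrt(W_g); in particular b_g = 0 as soon as the
   inequality is strict.  Since ||X_g^T y|| <= n lam_m sqrt(W_g), with equality
   for the group *, these conditions put r in the two half-spaces
   lam <X b, y> <= lam_m <X b, r>  and  lam_m <r, vbar> <= lam ||X_*^T y||^2,
   and every such r satisfies 2 lam_m r in B(c, rho) with
   c = (lam + lam_m) y - (lam_m - lam) vbar / n,  rho = (lam_m - lam) ||y - vbar / n||.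
   As (1/n) X_g^T X_g = I, ||X_g^T w|| <= sqrt n ||w||, hence
   2 lam_m ||X_g^T r|| <= ||X_g^T c|| + sqrt n rho, and the hypothesis of the
   theorem says exactly that this is below 2 n lam lam_m sqrt(W_g). *)

From HB Require Import structures.
From mathcomp Require Import all_boot all_order all_algebra.
From mathcomp Require Import reals.
From mathcomp Require Import ring lra.
Set Implicit Arguments. Unset Strict Implicit. Unset Printing Implicit Defensive.
Import Order.TTheory GRing.Theory Num.Theory.
Local Open Scope ring_scope.

Section InnerProduct.
Variable R : rcfType.
Implicit Types (m : nat) (s t : R).

Definition dot m (a b : 'cV[R]_m) : R := (a^T *m b) 0 0.
Definition vnorm m (a : 'cV[R]_m) : R := Num.sqrt (dot a a).

Lemma dotE m (a b : 'cV[R]_m) : dot a b = \sum_(i < m) a i 0 * b i 0.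
Proof. by rewrite /dot mxE; apply: eq_bigr => i _; rewrite mxE. Qed.

Lemma dotC m (a b : 'cV[R]_m) : dot a b = dot b a.
Proof. by rewrite !dotE; apply: eq_bigr => i _; rewrite mulrC. Qed.

Lemma dotDl m (a b c : 'cV[R]_m) : dot (a + b) c = dot a c + dot b c.
Proof. by rewrite /dot linearD mulmxDl mxE. Qed.

Lemma dotBl m (a b c : 'cV[R]_m) : dot (a - b) c = dot a c - dot b c.
Proof. by rewrite /dot linearB mulmxBl !mxE. Qed.

Lemma dotZl m s (a c : 'cV[R]_m) : dot (s *: a) c = s * dot a c.
Proof. by rewrite /dot linearZ -scalemxAl mxE. Qed.

Lemma dotDr m (a b c : 'cV[R]_m) : dot c (a + b) = dot c a + dot c b.
Proof. by rewrite dotC dotDl !(dotC c). Qed.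

Lemma dotBr m (a b c : 'cV[R]_m) : dot c (a - b) = dot c a - dot c b.
Proof. by rewrite dotC dotBl !(dotC c). Qed.

Lemma dotZr m s (a c : 'cV[R]_m) : dot c (s *: a) = s * dot c a.
Proof. by rewrite dotC dotZl dotC. Qed.

Lemma dot_subZ m s (a w : 'cV[R]_m) :
  dot (a - s *: w) (a - s *: w) = dot a a - 2 * s * dot a w + s ^+ 2 * dot w w.
Proof. by rewrite dotBl !dotBr !dotZl !dotZr (dotC w a); ring. Qed.

Lemma dot_mulmxl m k (M : 'M[R]_(k, m)) a b : dot (M *m a) b = dot a (M^T *m b).
Proof. by rewrite /dot trmx_mul mulmxA. Qed.

Lemma dotvv_ge0 m (a : 'cV[R]_m) : 0 <= dot a a.
Proof. by rewrite dotE; apply: sumr_ge0 => i _; rewrite -expr2 sqr_ge0. Qed.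

Lemma dotvv_eq0 m (a : 'cV[R]_m) : dot a a = 0 -> a = 0.
Proof.
rewrite dotE => /psumr_eq0P sq0; apply/matrixP => i j; rewrite ord1 mxE.
by apply/eqP; rewrite -sqrf_eq0 expr2 sq0 // => k _; rewrite -expr2 sqr_ge0.
Qed.

Lemma cauchy_schwarz m (a b : 'cV[R]_m) : dot a b ^+ 2 <= dot a a * dot b b.
Proof.
have := dotvv_ge0 (dot b b *: a - dot a b *: b).
rewrite !dotBl !dotBr !dotZl !dotZr (dotC b a).
have [/dotvv_eq0 ->|bb_gt0] := eqVneq (dot b b) 0.
  by move=> _; rewrite /dot !mulmx0 !mxE expr0n /= mulr0.
have {}bb_gt0 : 0 < dot b b by rewrite lt0r bb_gt0 dotvv_ge0.
nra.
Qed.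

Lemma vnorm_ge0 m (a : 'cV[R]_m) : 0 <= vnorm a.
Proof. exact: sqrtr_ge0. Qed.

Lemma sqr_vnorm m (a : 'cV[R]_m) : vnorm a ^+ 2 = dot a a.
Proof. by rewrite sqr_sqrtr // dotvv_ge0. Qed.

Lemma vnorm_le m (a : 'cV[R]_m) t : 0 <= t -> (vnorm a <= t) = (dot a a <= t ^+ 2).
Proof. by move=> t_ge0; rewrite -ler_sqr ?nnegrE ?vnorm_ge0 // sqr_vnorm. Qed.

Lemma vnorm_eq0 m (a : 'cV[R]_m) : vnorm a = 0 -> a = 0.
Proof. by move=> a0; apply: dotvv_eq0; rewrite -sqr_vnorm a0 expr0n. Qed.

Lemma vnormZ m s (a : 'cV[R]_m) : vnorm (s *: a) = `|s| * vnorm a.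
Proof. by rewrite /vnorm dotZl dotZr mulrA -expr2 sqrtrM ?sqr_ge0 // sqrtr_sqr. Qed.

Lemma dot_le_vnorm m (a b : 'cV[R]_m) : dot a b <= vnorm a * vnorm b.
Proof.
rewrite (le_trans (ler_norm _)) // -sqrtr_sqr -sqrtrM ?dotvv_ge0 //.
exact/ler_wsqrtr/cauchy_schwarz.
Qed.

Lemma ler_vnormD m (a b : 'cV[R]_m) : vnorm (a + b) <= vnorm a + vnorm b.
Proof.
rewrite vnorm_le ?addr_ge0 ?vnorm_ge0 // dotDl !dotDr (dotC b a) sqrrD !sqr_vnorm.
by have := dot_le_vnorm a b; lra.
Qed.

End InnerProduct.

Lemma ball_of_halfspaces (R : rcfType) m (y r v : 'cV[R]_m) (N K lam lm : R) :
  0 < N -> 0 <= lam <= lm -> dot y v = K -> dot v v = N * K ->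
  lam * dot (y - r) y <= lm * dot (y - r) r -> lm * dot r v <= lam * K ->
  vnorm (2 * lm *: r - ((lam + lm) *: y - (lm - lam) / N *: v))
  <= (lm - lam) * vnorm (y - N^-1 *: v).
Proof.
move=> N_gt0 /andP[lam_ge0 lam_le] yv vv gain vbound.
rewrite vnorm_le ?mulr_ge0 ?vnorm_ge0 ?subr_ge0 // exprMn sqr_vnorm.
rewrite !dotBl (dotC y r) in gain.
rewrite !dotBl !dotBr !dotZl !dotZr (dotC y r) (dotC v r) (dotC v y) yv vv.
set A := dot r r; set B := dot r y; set C := dot r v; set Dy := dot y y.
(* The squared radius minus the squared distance is a nonnegative combination
   of the two half-space inequalities. *)
rewrite -subr_ge0 (_ : _ - _ = 4 * lm * (lm * (B - A) - lam * (Dy - B))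
  + 4 * ((lm - lam) / N) * (lam * K - lm * C)); last by field; rewrite gt_eqF.
have lm_ge0 : 0 <= lm := le_trans lam_ge0 lam_le.
by rewrite addr_ge0 // !mulr_ge0 ?subr_ge0 ?invr_ge0 // ltW.
Qed.

Lemma ge0_of_perturbation (R : realFieldType) (e a c : R) : 0 < e ->
  (forall h, 0 < h <= e -> 0 <= h * a + h ^+ 2 * c) -> 0 <= a.
Proof.
move=> e_gt0 ineq; rewrite leNgt; apply/negP => a_lt0.
pose h := Num.min e (- a / (`|c| + 1)).
have c1_gt0 : 0 < `|c| + 1 by rewrite ltr_wpDl.
have h_gt0 : 0 < h by rewrite lt_min e_gt0 divr_gt0 ?oppr_gt0.
have h_le : h * (`|c| + 1) <= - a by rewrite -ler_pdivlMr // ge_min lexx orbT.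
have := ineq h; rewrite h_gt0 ge_min lexx /= => /(_ isT).
have := ler_norm c; nra.
Qed.

Lemma eq0_of_perturbation (R : realFieldType) (e a c : R) : 0 < e ->
  (forall h, `|h| <= e -> 0 <= h * a + h ^+ 2 * c) -> a = 0.
Proof.
move=> e_gt0 ineq; apply/eqP; rewrite eq_le -oppr_ge0.
apply/andP; split; apply: (ge0_of_perturbation (c := c) e_gt0) => h /andP[h_gt0 h_le].
  by have := ineq (- h); rewrite normrN gtr0_norm // sqrrN mulNr mulrN => /(_ h_le).
by have := ineq h; rewrite gtr0_norm // => /(_ h_le).
Qed.

Lemma vnorm2E (R : realType) n (v : 'cV[R]_n) : vnorm2 v = dot v v.
Proof. by rewrite /vnorm2 dotE; apply: eq_bigr => i _; rewrite expr2. Qed.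

Local Notation sqrtW grp g := (Num.sqrt (gsize grp g)%:R).

Section GroupMask.
Variables (R : realType) (p G : nat) (grp : 'I_p -> 'I_G).

(* [gmask g *m v] is the block v_g padded with zeros. *)
Definition gmask (g : 'I_G) : 'M[R]_p := diag_mx (\row_j (grp j == g)%:R).

Lemma gmaskE g (v : 'cV[R]_p) j : (gmask g *m v) j 0 = (grp j == g)%:R * v j 0.
Proof. by rewrite /gmask mul_diag_mx !mxE. Qed.

Lemma tr_gmask g : (gmask g)^T = gmask g.
Proof. exact: tr_diag_mx. Qed.

Lemma gmaskK g (v : 'cV[R]_p) : gmask g *m (gmask g *m v) = gmask g *m v.
Proof. by apply/matrixP => i j; rewrite ord1 !gmaskE mulrA -natrM mulnb andbb. Qed.

Lemma gmask_disjoint g h (v : 'cV[R]_p) : g != h -> gmask g *m (gmask h *m v) = 0.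
Proof.
move=> gh; apply/matrixP => i j; rewrite ord1 !gmaskE mxE mulrA -natrM mulnb.
by have [->|] := eqVneq (grp i) g; rewrite ?(negPf gh) mul0r.
Qed.

Lemma dot_gmask g (a b : 'cV[R]_p) :
  dot (gmask g *m a) (gmask g *m b) = \sum_(j < p | grp j == g) a j 0 * b j 0.
Proof.
rewrite dotE [RHS]big_mkcond; apply: eq_bigr => j _; rewrite !gmaskE.
by case: eqP; rewrite ?mul1r ?mul0r.
Qed.

Lemma dot_gmaskr g (a b : 'cV[R]_p) :
  dot a (gmask g *m b) = dot (gmask g *m a) (gmask g *m b).
Proof. by rewrite [RHS]dot_mulmxl tr_gmask gmaskK. Qed.

Lemma dot_sum_gmask (a b : 'cV[R]_p) :
  dot a b = \sum_(g < G) dot (gmask g *m a) (gmask g *m b).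
Proof.
rewrite dotE (partition_big grp xpredT) //.
by apply: eq_bigr => g _; rewrite dot_gmask.
Qed.

Lemma gnorm2E g (v : 'cV[R]_p) : gnorm2 grp g v = dot (gmask g *m v) (gmask g *m v).
Proof. by rewrite dot_gmask; apply: eq_bigr => j _; rewrite expr2. Qed.

Lemma sqrt_gnorm2 g (v : 'cV[R]_p) : Num.sqrt (gnorm2 grp g v) = vnorm (gmask g *m v).
Proof. by rewrite gnorm2E. Qed.

Lemma sum_vnorm_gmaskD (w : 'I_G -> R) g (v e : 'cV[R]_p) :
  \sum_(i < G) w i * vnorm (gmask i *m (v + gmask g *m e))
  = \sum_(i < G) w i * vnorm (gmask i *m v)
    + w g * (vnorm (gmask g *m v + gmask g *m e) - vnorm (gmask g *m v)).
Proof.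
rewrite (bigD1 g) //= [in RHS](bigD1 g) //= mulmxDr gmaskK.
under eq_bigr => i ig do rewrite mulmxDr gmask_disjoint // addr0.
ring.
Qed.

End GroupMask.

Section OrthonormalGroups.
Variables (R : realType) (n p G : nat) (X : 'M[R]_(n, p)) (grp : 'I_p -> 'I_G).
Local Notation D := (gmask R grp).

Lemma gcrossE g (v w : 'cV[R]_n) :
  gcross X grp g v w = dot (D g *m (X^T *m v)) (D g *m (X^T *m w)).
Proof. by rewrite dot_gmask. Qed.

Lemma gprojE g (v : 'cV[R]_n) : gproj X grp g v = X *m (D g *m (X^T *m v)).
Proof.
apply/matrixP => i k; rewrite ord1 /gproj summxE !mxE big_mkcond.
apply: eq_bigr => j _; rewrite gmaskE !mxE.
by case: eqP; rewrite ?mul1r ?mul0r ?mulr0 // mulrC.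
Qed.

Lemma gratioE g (v : 'cV[R]_n) :
  gratio X v grp g = vnorm (D g *m (X^T *m v)) / (n%:R * sqrtW grp g).
Proof. by rewrite /gratio sqrt_gnorm2. Qed.

Lemma gnorm2_trmxB g a c (v w : 'cV[R]_n) :
  gnorm2 grp g (X^T *m (a *: v - c *: w))
  = a ^+ 2 * gnorm2 grp g (X^T *m v) - 2 * a * c * gcross X grp g v w
    + c ^+ 2 * gnorm2 grp g (X^T *m w).
Proof.
rewrite !gnorm2E gcrossE !mulmxBr -!scalemxAr.
rewrite !dotBl !dotBr !dotZl !dotZr (dotC (D g *m (X^T *m w))); ring.
Qed.

Lemma dot_gproj g (v : 'cV[R]_n) :
  dot v (gproj X grp g v) = vnorm (D g *m (X^T *m v)) ^+ 2.
Proof. by rewrite gprojE dotC dot_mulmxl dotC dot_gmaskr sqr_vnorm. Qed.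

Hypotheses (hn : (0 < n)%N) (hXo : forall j k : 'I_p, grp j = grp k ->
  n%:R^-1 * \sum_(i < n) X i j * X i k = (j == k)%:R).

Lemma gmask_gram g : D g *m (X^T *m X) *m D g = n%:R *: D g.
Proof.
apply/matrixP => j k; rewrite /gmask mul_mx_diag mul_diag_mx !mxE.
have [gj|_] := eqVneq (grp j) g; last by rewrite !mul0r mul0rn mulr0.
have [gk|gk] := eqVneq (grp k) g; last first.
  have [jk|_] := eqVneq j k; first by rewrite -jk gj eqxx in gk.
  by rewrite /= !mulr0n !mulr0.
have n_neq0 : (n%:R : R) != 0 by rewrite pnatr_eq0 -lt0n.
rewrite /= !mulr1n mul1r mulr1 -(hXo (etrans gj (esym gk))) mulrA mulfV // mul1r.
by apply: eq_bigr => i _; rewrite !mxE.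
Qed.

Lemma dot_mulmx_gmask g (e : 'cV[R]_p) :
  dot (X *m (D g *m e)) (X *m (D g *m e)) = n%:R * dot (D g *m e) (D g *m e).
Proof.
rewrite dot_mulmxl -{1}gmaskK dot_mulmxl tr_gmask.
have -> : D g *m (X^T *m (X *m (D g *m e))) = D g *m (X^T *m X) *m D g *m e.
  by rewrite !mulmxA.
by rewrite gmask_gram -scalemxAl dotZr.
Qed.

Lemma vnorm_mulmx_gmask g (e : 'cV[R]_p) :
  vnorm (X *m (D g *m e)) = Num.sqrt n%:R * vnorm (D g *m e).
Proof. by rewrite /vnorm dot_mulmx_gmask sqrtrM ?ler0n. Qed.

Lemma dotvv_gproj g (v : 'cV[R]_n) :
  dot (gproj X grp g v) (gproj X grp g v) = n%:R * vnorm (D g *m (X^T *m v)) ^+ 2.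
Proof. by rewrite gprojE dot_mulmx_gmask sqr_vnorm. Qed.

Lemma vnorm_gmask_trmx g (w : 'cV[R]_n) :
  vnorm (D g *m (X^T *m w)) <= Num.sqrt n%:R * vnorm w.
Proof.
set z := vnorm _; have := mulr_ge0 (sqrtr_ge0 n%:R) (vnorm_ge0 w).
have : z ^+ 2 <= z * (Num.sqrt n%:R * vnorm w).
  rewrite mulrCA [z * _]mulrC mulrCA -vnorm_mulmx_gmask (le_trans _ (dot_le_vnorm _ _)) //.
  by rewrite sqr_vnorm dot_mulmxl tr_gmask gmaskK dot_mulmxl trmxK.
have := vnorm_ge0 (D g *m (X^T *m w)); rewrite -/z.
move: (Num.sqrt _ * _) => a; nra.
Qed.

Lemma vnorm_gmask_trmxB g (w c : 'cV[R]_n) :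
  vnorm (D g *m (X^T *m w))
  <= vnorm (D g *m (X^T *m c)) + Num.sqrt n%:R * vnorm (w - c).
Proof.
have -> : D g *m (X^T *m w) = D g *m (X^T *m c) + D g *m (X^T *m (w - c)).
  by rewrite -!mulmxDr addrC subrK.
by apply: le_trans (ler_vnormD _ _) _; rewrite lerD2l vnorm_gmask_trmx.
Qed.

End OrthonormalGroups.

Section GroupLassoOptimality.
Variables (R : realType) (n p G : nat) (X : 'M[R]_(n, p)) (y : 'cV[R]_n).
Variables (grp : 'I_p -> 'I_G) (lam : R) (b : 'cV[R]_p).
Hypotheses (hn : (0 < n)%N) (hXo : forall j k : 'I_p, grp j = grp k ->
  n%:R^-1 * \sum_(i < n) X i j * X i k = (j == k)%:R).
Hypotheses (hlam : 0 < lam) (hb : is_glasso_min X y grp lam b).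
Local Notation D := (gmask R grp).
Local Notation N := (n%:R : R).
Local Notation u := (X^T *m (y - X *m b)).

Lemma glasso_objE v : glasso_obj X y grp lam v =
  (2 * N)^-1 * dot (y - X *m v) (y - X *m v)
  + lam * \sum_(g < G) sqrtW grp g * vnorm (D g *m v).
Proof. by rewrite /glasso_obj vnorm2E; under eq_bigr do rewrite sqrt_gnorm2. Qed.

Lemma glasso_perturb g e h :
  0 <= - h * dot u (D g *m e) / N + h ^+ 2 / 2 * dot (D g *m e) (D g *m e)
       + lam * sqrtW grp g * (vnorm (D g *m b + h *: (D g *m e)) - vnorm (D g *m b)).
Proof.
have := hb (b + D g *m (h *: e)); rewrite !glasso_objE sum_vnorm_gmaskD -scalemxAr.
rewrite mulmxDr opprD addrA -scalemxAr dot_subZ dot_mulmx_gmask //.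
rewrite dotC dot_mulmxl (dotC (D g *m e)); set r := y - X *m b.
have N_neq0 : N != 0 by rewrite pnatr_eq0 -lt0n.
set A := dot r r; set B := dot (X^T *m r) _; set C := dot (D g *m e) _.
set P := \sum_(i < G) _; set Q := _ - vnorm (D g *m b).
rewrite -subr_ge0 (_ : _ - _ = - h * B / N + h ^+ 2 / 2 * C + lam * sqrtW grp g * Q) //.
by field.
Qed.

Lemma glasso_kkt_active g :
  dot (D g *m b) (D g *m u) = N * lam * sqrtW grp g * vnorm (D g *m b).
Proof.
have N_neq0 : N != 0 by rewrite pnatr_eq0 -lt0n.
rewrite dotC -dot_gmaskr.
suff : lam * sqrtW grp g * vnorm (D g *m b) - dot u (D g *m b) / N = 0.
  by move/eqP; rewrite subr_eq0 -!mulrA => /eqP ->; field.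
(* Rescaling b_g by 1 + h changes the penalty linearly in h. *)
apply: (eq0_of_perturbation (e := 1) (c := dot (D g *m b) (D g *m b) / 2)) => // h.
rewrite ler_norml => /andP[h_ge _]; have := glasso_perturb g b h.
rewrite -[X in vnorm (X + _)]scale1r -scalerDl vnormZ ger0_norm; last by lra.
set L := lam * _; set U := dot u _; set Z := vnorm _; set C := dot _ _.
by have -> : h * (L * Z - U / N) + h ^+ 2 * (C / 2)
  = - h * U / N + h ^+ 2 / 2 * C + L * ((1 + h) * Z - Z) by ring.
Qed.

Lemma glasso_kkt_bound g : vnorm (D g *m u) <= N * lam * sqrtW grp g.
Proof.
have N_gt0 : 0 < N by rewrite ltr0n.
have L_ge0 : 0 <= lam * sqrtW grp g := mulr_ge0 (ltW hlam) (sqrtr_ge0 _).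
set z := vnorm (D g *m u).
have : 0 <= z * (lam * sqrtW grp g - z / N).
  (* Moving b_g along u_g lowers the loss at rate z^2 / n and raises the
     penalty at rate at most lam sqrt(W_g) z. *)
  apply: (ge0_of_perturbation (e := 1) (c := z ^+ 2 / 2)) => // h /andP[h_gt0 _].
  have := glasso_perturb g u h; rewrite dot_gmaskr -sqr_vnorm -/z.
  have : vnorm (D g *m b + h *: (D g *m u)) <= vnorm (D g *m b) + h * z.
    by rewrite (le_trans (ler_vnormD _ _)) // vnormZ gtr0_norm.
  rewrite -subr_ge0 => /(mulr_ge0 L_ge0); lra.
have := vnorm_ge0 (D g *m u); rewrite le_eqVlt -/z => /predU1P[<- _|z_gt0].
  by rewrite -mulrA mulr_ge0 ?ler0n.
by rewrite pmulr_rge0 // subr_ge0 ler_pdivrMr // mulrC mulrA.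
Qed.

Lemma glasso_kkt_inactive g :
  vnorm (D g *m u) < N * lam * sqrtW grp g -> D g *m b = 0.
Proof.
move=> u_lt; apply: vnorm_eq0; apply/eqP; rewrite eq_le vnorm_ge0 andbT.
have := dot_le_vnorm (D g *m b) (D g *m u); rewrite glasso_kkt_active.
have := vnorm_ge0 (D g *m b); nra.
Qed.

End GroupLassoOptimality.

Section Screening.
Variables (R : realType) (n p G : nat) (X : 'M[R]_(n, p)) (y : 'cV[R]_n).
Variables (grp : 'I_p -> 'I_G) (lam lm : R) (gs : 'I_G) (b : 'cV[R]_p).
Hypotheses (hn : (0 < n)%N) (hXo : forall j k : 'I_p, grp j = grp k ->
  n%:R^-1 * \sum_(i < n) X i j * X i k = (j == k)%:R).
Hypotheses (hlam : 0 < lam) (hlm : lam <= lm) (hb : is_glasso_min X y grp lam b).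
Local Notation D := (gmask R grp).
Local Notation N := (n%:R : R).
Local Notation r := (y - X *m b).
Local Notation vbar := (gproj X grp gs y).
Local Notation center := ((lam + lm) *: y - (lm - lam) / N *: vbar).
Local Notation radius := ((lm - lam) * vnorm (y - N^-1 *: vbar)).
Hypotheses (hgy : forall g, vnorm (D g *m (X^T *m y)) <= N * lm * sqrtW grp g)
           (hgs : vnorm (D gs *m (X^T *m y)) = N * lm * sqrtW grp gs).

Lemma dot_fit_y_le : lam * dot (X *m b) y <= lm * dot (X *m b) r.
Proof.
rewrite !dot_mulmxl (dot_sum_gmask grp b) (dot_sum_gmask grp b (X^T *m r)) !mulr_sumr.
apply: ler_sum => g _; rewrite (glasso_kkt_active hn hXo hb).
apply: le_trans (ler_wpM2l (ltW hlam) (dot_le_vnorm _ _)) _.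
rewrite [X in _ <= X](_ : _ = lam * vnorm (D g *m b) * (N * lm * sqrtW grp g)); last by ring.
rewrite [X in X <= _]mulrA; apply: ler_wpM2l (hgy g).
exact: mulr_ge0 (ltW hlam) (vnorm_ge0 _).
Qed.

Lemma dot_residual_gproj_le : lm * dot r vbar <= lam * vnorm (D gs *m (X^T *m y)) ^+ 2.
Proof.
have lm_ge0 : 0 <= lm by rewrite (le_trans (ltW hlam)).
have NlmW_ge0 : 0 <= N * lm * sqrtW grp gs by rewrite !mulr_ge0 ?ler0n ?sqrtr_ge0.
rewrite gprojE dotC dot_mulmxl dotC dot_gmaskr.
apply: le_trans (ler_wpM2l lm_ge0 (dot_le_vnorm _ _)) _.
rewrite hgs mulrA [X in _ <= X](_ : _ =
  lm * (N * lam * sqrtW grp gs) * (N * lm * sqrtW grp gs)); last by ring.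
exact/(ler_wpM2r NlmW_ge0)/(ler_wpM2l lm_ge0)/glasso_kkt_bound.
Qed.

Lemma residual_in_ball : vnorm (2 * lm *: r - center) <= radius.
Proof.
apply: (ball_of_halfspaces (K := vnorm (D gs *m (X^T *m y)) ^+ 2)).
- by rewrite ltr0n.
- by rewrite hlm ltW.
- exact: dot_gproj.
- exact: dotvv_gproj.
- by rewrite subKr; exact: dot_fit_y_le.
- exact: dot_residual_gproj_le.
Qed.

Lemma vnorm_group_residual_le g :
  2 * lm * vnorm (D g *m (X^T *m r))
  <= vnorm (D g *m (X^T *m center)) + Num.sqrt N * radius.
Proof.
have lm2_gt0 : 0 < 2 * lm by rewrite mulr_gt0 // (lt_le_trans hlam).
rewrite -[2 * lm]gtr0_norm // -vnormZ !scalemxAr.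
apply: le_trans (vnorm_gmask_trmxB hn hXo g _ center) _.
by rewrite lerD2l ler_wpM2l ?sqrtr_ge0 ?residual_in_ball.
Qed.

Lemma screening_centerE g :
  (lam + lm) ^+ 2 * gnorm2 grp g (X^T *m y)
  - 2 * (lm ^+ 2 - lam ^+ 2) * gcross X grp g y vbar / N
  + (lm - lam) ^+ 2 * gnorm2 grp g (X^T *m vbar) / N ^+ 2
  = gnorm2 grp g (X^T *m center).
Proof. by rewrite gnorm2_trmxB; field; rewrite pnatr_eq0 -lt0n. Qed.

Lemma screening_radiusE :
  N * vnorm2 y - N ^+ 2 * lm ^+ 2 * (gsize grp gs)%:R
  = N * vnorm (y - N^-1 *: vbar) ^+ 2.
Proof.
rewrite vnorm2E sqr_vnorm dot_subZ dot_gproj dotvv_gproj // hgs.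
by rewrite exprMn sqr_sqrtr ?ler0n //; field; rewrite pnatr_eq0 -lt0n.
Qed.

End Screening.

Unset Implicit Arguments.

Theorem theorem4p2 (R : realType) (n p G : nat)
  (X : 'M[R]_(n, p)) (y : 'cV[R]_n) (grp : 'I_p -> 'I_G)
  (hn : (0 < n)%N)
  (hy : \sum_(i < n) y i 0 = 0)
  (hXc : forall j : 'I_p, \sum_(i < n) X i j = 0)
  (hXs : forall j : 'I_p, n%:R^-1 * \sum_(i < n) X i j ^+ 2 = 1)
  (hW : forall g : 'I_G, (0 < gsize grp g)%N)
  (hXo : forall j k : 'I_p, grp j = grp k ->
     n%:R^-1 * \sum_(i < n) X i j * X i k = (j == k)%:R)
  (gs : 'I_G) (hgs : forall g : 'I_G, gratio X y grp g <= gratio X y grp gs)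
  (lam : R) (hlam0 : 0 < lam) (hlam1 : lam <= gratio X y grp gs)
  (g : 'I_G) :
  let lm := gratio X y grp gs in
  let vbar := gproj X grp gs y in
  Num.sqrt ((lam + lm) ^+ 2 * gnorm2 grp g (X^T *m y)
            - 2 * (lm ^+ 2 - lam ^+ 2) * gcross X grp g y vbar / n%:R
            + (lm - lam) ^+ 2 * gnorm2 grp g (X^T *m vbar) / n%:R ^+ 2)
    < 2 * n%:R * lam * lm * Num.sqrt (gsize grp g)%:R
      - (lm - lam) * Num.sqrt (n%:R * vnorm2 y - n%:R ^+ 2 * lm ^+ 2 * (gsize grp gs)%:R) ->
  forall b : 'cV[R]_p, is_glasso_min X y grp lam b ->
  forall j : 'I_p, grp j = g -> b j 0 = 0.
Proof.
rewrite /= => rule b hb j gj.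
set lm := gratio X y grp gs in hgs hlam1 rule.
have NW_gt0 h : 0 < n%:R * sqrtW grp h :> R by rewrite mulr_gt0 ?sqrtr_gt0 ?ltr0n.
have hgy h : vnorm (gmask R grp h *m (X^T *m y)) <= n%:R * lm * sqrtW grp h.
  by have := hgs h; rewrite gratioE (ler_pdivrMr _ _ (NW_gt0 h)) mulrCA mulrA.
have hys : vnorm (gmask R grp gs *m (X^T *m y)) = n%:R * lm * sqrtW grp gs.
  by rewrite /lm gratioE; field; rewrite !gt_eqF ?sqrtr_gt0 ?ltr0n ?hW.
rewrite (screening_centerE X y grp lam lm gs hn) (screening_radiusE hn hXo hys) in rule.
rewrite sqrtrM ?ler0n // sqrtr_sqr ger0_norm ?vnorm_ge0 // sqrt_gnorm2 in rule.
have bound := vnorm_group_residual_le hn hXo hlam0 hlam1 hb hgy hys g.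
have inactive : vnorm (gmask R grp g *m (X^T *m (y - X *m b))) < n%:R * lam * sqrtW grp g.
  rewrite -(ltr_pM2l (_ : 0 < 2 * lm)); last by rewrite mulr_gt0 // (lt_le_trans hlam0).
  lra.
have /(congr1 (fun v : 'cV[R]_p => v j 0)) := glasso_kkt_inactive hn hXo hb inactive.
by rewrite gmaskE gj eqxx mul1r mxE.
Qed.
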